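(* For every positive integer $n$, \[ \sum_{k=1}^{n}(4k+1)\frac{(\tfrac{1}{2})_k^3}{k!^3}\frac{(-n)_k}{(\tfrac{3}{2}+n)_k}\sum_{i=1}^{2k}\frac{(-1)^i}{i^2} =\frac{(\tfrac{1}{2})_n(\tfrac{3}{2})_n}{n!^2}\sum_{j=1}^{n}\frac{1}{4j^2}. \]
   Context: For a complex number $x$ and a nonnegative integer $n$, $(x)_n=x(x+1)\cdots(x+n-1)$ denotes the shifted factorial (Pochhammer symbol), with $(x)_0=1$. *)

From mathcomp Require Import all_boot all_order all_algebra.
Set Implicit Arguments. Unset Strict Implicit. Unset Printing Implicit Defensive.
Import Order.TTheory GRing.Theory Num.Theory.
Local Open Scope ring_scope.

Definition poch {R : pzRingType} (x : R) (n : nat) : R :=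
  \prod_(i < n) (x + i%:R).

From mathcomp Require Import all_boot all_order all_algebra.
From mathcomp Require Import ring lra.
Import Order.TTheory GRing.Theory Num.Theory.
Local Open Scope ring_scope.

(* Write T(n,k) = (4k+1) ((1/2)_k/k!)^3 (-n)_k/(3/2+n)_k, H(k) for the
   alternating sum of 1/i^2 over 1 <= i <= 2k, C(n) = (1/2)_n (3/2)_n/n!^2
   and S(n) = sum_k T(n,k) H(k); the claim is S(n) = C(n) sum_(j<=n) 1/(4j^2).
   Since T(n,k) = 0 for k > n, all sums may be extended beyond k = n.
   The proof is by induction on n, in the spirit of creative telescoping:
   1. T satisfies the Zeilberger-type recurrence
        T(n+1,k) - c(n) T(n,k) = G(n,k+1) - G(n,k),   c(n) = C(n+1)/C(n),
      with an explicit certificate G(n,k) (a rational multiple of T(n,k-1)).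
   2. Summation by parts then turns it into
        S(n+1) - c(n) S(n) = - sum_k G(n,k+1) (H(k+1) - H(k)).
   3. Writing G(n,j+1) = (2n+3)/(n+1)^2 E(n,j), the defect sum
      Q(n) = sum_j E(n,j) (H(j+1) - H(j)) satisfies a second telescoping recurrence Q(n+1) = q(n) Q(n), whence
      Q(n) = - C(n+1)/(4 (2n+3)) and S(n+1) - c(n) S(n) = C(n+1)/(4 (n+1)^2),
      which is exactly the recurrence of the right-hand side. *)

Lemma poch0 (R : pzRingType) (x : R) : poch x 0 = 1.
Proof. by rewrite /poch big_ord0. Qed.

Lemma pochS (R : pzRingType) (x : R) (k : nat) : poch x k.+1 = poch x k * (x + k%:R).
Proof. by rewrite /poch big_ord_recr. Qed.

Lemma poch_neg_nat (R : comPzRingType) (n k : nat) : (n < k)%N -> poch (- n%:R : R) k = 0.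
Proof. by move=> ltnk; rewrite /poch (bigD1 (Ordinal ltnk)) //= addNr mul0r. Qed.

Lemma poch_gt0 (R : numDomainType) (x : R) (k : nat) : 0 < x -> 0 < poch x k.
Proof.
move=> x_gt0; elim: k => [|k IHk]; first by rewrite poch0 ltr01.
by rewrite pochS mulr_gt0 // ltr_wpDr.
Qed.

Lemma summation_by_parts (R : comPzRingType) (g h : nat -> R) (N : nat) : g 0%N = 0 ->
  \sum_(0 <= k < N) (g k.+1 - g k) * h k =
  g N * h N - \sum_(0 <= k < N) g k.+1 * (h k.+1 - h k).
Proof.
move=> g0; elim: N => [|N IHN]; first by rewrite !big_geq // g0 mul0r subr0.
by rewrite !big_nat_recr //= IHN; ring.
Qed.

Section Identity.

Variable R : realFieldType.

(* The side conditions left by [field] in this file are nonvanishing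
   conditions of affine expressions with nonnegative coefficients in the
   casts of the naturals m and k. *)
Ltac field_nat m k :=
  have := ler0n R m; have := ler0n R k; move=> ? ?;
  field; repeat (apply/andP; split); try done; lra.

Lemma natf_neq0 (m : nat) : (m`!)%:R != 0 :> R.
Proof. by rewrite pnatr_eq0 -lt0n fact_gt0. Qed.

Definition hcoef (k : nat) : R := poch (1/2) k / k`!%:R.

Definition term (n k : nat) : R :=
  (4 * k + 1)%:R * hcoef k ^+ 3 * poch (- n%:R) k / poch (3/2 + n%:R) k.

Definition term_ratio_k (x y : R) : R :=
  (4 * y + 5) / (4 * y + 1) * ((1/2 + y) / (y + 1)) ^+ 3 * (y - x) / (3/2 + x + y).

Definition term_ratio_n (x y : R) : R :=
  (y - 1 - x) / (- 1 - x) * (3/2 + x + y) / (3/2 + x).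

Lemma hcoefS (k : nat) : hcoef k.+1 = hcoef k * (k%:R + 1/2) / (k%:R + 1).
Proof. by rewrite /hcoef pochS factS natrM invfM -[k.+1%:R]natr1; ring. Qed.

Lemma term0 (n : nat) : term n 0 = 1.
Proof. by rewrite /term /hcoef !poch0 fact0 !divr1 expr1n !mulr1. Qed.

Lemma term_vanish (n k : nat) : (n < k)%N -> term n k = 0.
Proof. by move=> ltnk; rewrite /term poch_neg_nat // mulr0 mul0r. Qed.

Lemma termSk (n k : nat) : term n k.+1 = term n k * term_ratio_k n%:R k%:R.
Proof.
have D_neq0 : poch (3/2 + n%:R : R) k != 0.
  by rewrite gt_eqF // poch_gt0 //; have := ler0n R n; lra.
rewrite /term /term_ratio_k hcoefS !pochS !natrD !natrM -[k.+1%:R]natr1.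
field_nat n k.
Qed.

Lemma term_Sn (n k : nat) : term n k = term n.+1 k * term_ratio_n n%:R k%:R.
Proof.
elim: k => [|k IHk].
  by rewrite !term0 mul1r /term_ratio_n addr0 sub0r; field_nat n n.
rewrite !termSk IHk; move: (term n.+1 k) => X.
rewrite /term_ratio_k /term_ratio_n -[n.+1%:R]natr1 -[k.+1%:R]natr1.
field_nat n k.
Qed.

Definition altH (k : nat) : R := \sum_(1 <= i < (2 * k).+1) (-1) ^+ i / (i%:R ^+ 2).

Definition altH_incr (y : R) : R := 1 / (2 * y + 2) ^+ 2 - 1 / (2 * y + 1) ^+ 2.

Lemma altH0 : altH 0 = 0.
Proof. by rewrite /altH big_geq. Qed.

Lemma altHS (k : nat) : altH k.+1 = altH k + altH_incr k%:R.
Proof.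
rewrite /altH (_ : (2 * k.+1).+1 = (2 * k).+3)%N; last by rewrite mulnS.
rewrite big_nat_recr // big_nat_recr //= -addrA; congr (_ + _).
have even_sign : (-1 : R) ^+ (2 * k) = 1 by rewrite exprM sqrrN !expr1n.
rewrite /altH_incr !exprS even_sign.
rewrite -[(2 * k).+2%:R]natr1 -[(2 * k).+1%:R]natr1 natrM.
field_nat k k.
Qed.

Definition rhs_coef (n : nat) : R := poch (1/2) n * poch (3/2) n / (n`!%:R) ^+ 2.

Definition rhs_ratio (x : R) : R := (x + 1/2) * (x + 3/2) / (x + 1) ^+ 2.

Lemma rhs_coefS (n : nat) : rhs_coef n.+1 = rhs_coef n * rhs_ratio n%:R.
Proof.
rewrite /rhs_coef /rhs_ratio !pochS factS natrM -[n.+1%:R]natr1.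
have fact_neq0 := natf_neq0 n.
field_nat n n.
Qed.

Definition cert_core (n j : nat) : R :=
  term n j * (j%:R + 1/2) ^+ 3 / ((4 * j%:R + 1) * (n%:R + j%:R + 3/2)).

Definition cert (n k : nat) : R :=
  if k is j.+1 then (2 * n%:R + 3) / (n%:R + 1) ^+ 2 * cert_core n j else 0.

Lemma zeilberger (n k : nat) :
  term n.+1 k - rhs_ratio n%:R * term n k = cert n k.+1 - cert n k.
Proof.
case: k => [|k].
  by rewrite /cert /cert_core !term0 subr0 /rhs_ratio; field_nat n n.
rewrite /cert /cert_core !termSk (term_Sn n k) -[n.+1%:R]natr1 -[k.+1%:R]natr1.
move: (term n.+1 k) => X.
rewrite /term_ratio_k /term_ratio_n /rhs_ratio; field_nat n k.
Qed.

(* The defect sum Q(n) = sum_j E(n,j) (H(j+1) - H(j)) produced by summation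
   by parts, its ratio q(n) = Q(n+1)/Q(n) and its own certificate W(n,j). *)
Definition defect_term (n j : nat) : R := cert_core n j * altH_incr j%:R.

Definition defect (n : nat) : R := \sum_(0 <= j < n.+2) defect_term n j.

Definition defect_ratio (x : R) : R := (x + 3/2) ^+ 2 / (x + 2) ^+ 2.

Definition defect_cert (n j : nat) : R :=
  if j is i.+1 then
    - (2 * n%:R + 3) * (i%:R + 1/2) ^+ 3 * (i%:R + 3/2)
    / (16 * (n%:R + 2) ^+ 2 * (4 * i%:R + 1) * (i%:R + 1) ^+ 2
       * (n%:R + i%:R + 3/2) * (n%:R + i%:R + 5/2)) * term n i
  else 0.

Lemma defect_telescoping (n j : nat) :
  defect_term n.+1 j - defect_ratio n%:R * defect_term n j =
  defect_cert n j.+1 - defect_cert n j.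
Proof.
case: j => [|j].
  rewrite /defect_term /defect_cert /cert_core /altH_incr !term0 subr0.
  by rewrite /defect_ratio -[n.+1%:R]natr1; field_nat n n.
rewrite /defect_term /defect_cert /cert_core /altH_incr !termSk (term_Sn n j).
rewrite -[n.+1%:R]natr1 -[j.+1%:R]natr1; move: (term n.+1 j) => X.
rewrite /term_ratio_k /term_ratio_n /defect_ratio; field_nat n j.
Qed.

Lemma defectS (n : nat) : defect n.+1 = defect_ratio n%:R * defect n.
Proof.
have tele := telescope_sumr_eq (defect_cert n)
  (fun j => defect_term n.+1 j - defect_ratio n%:R * defect_term n j)
  (leq0n n.+3) (fun j _ => defect_telescoping n j).
have extend : \sum_(0 <= j < n.+3) defect_term n j = defect n.
  by rewrite big_nat_recr //= /defect_term /cert_core term_vanish // !mul0r addr0.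
have cert_end : defect_cert n n.+3 = 0 by rewrite /defect_cert term_vanish // mulr0.
rewrite sumrB -mulr_sumr extend cert_end /= subr0 in tele.
by apply/eqP; rewrite -subr_eq0 /defect tele.
Qed.

Lemma defect_closed (n : nat) : defect n = - rhs_coef n.+1 / (4 * (2 * n%:R + 3)).
Proof.
elim: n => [|n IHn].
  rewrite /defect big_nat_recr //= big_nat1 /defect_term /cert_core.
  rewrite (@term_vanish 0 1) // term0 /rhs_coef !pochS !poch0 factS fact0.
  by rewrite expr1n divr1 /altH_incr; field.
rewrite defectS IHn [rhs_coef n.+2]rhs_coefS -[n.+1%:R]natr1.
rewrite /defect_ratio /rhs_ratio; move: (rhs_coef n.+1) => X.
field_nat n n.
Qed.

Definition lhs (n : nat) : R := \sum_(0 <= k < n.+1) term n k * altH k.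

Definition harm4 (n : nat) : R := \sum_(1 <= j < n.+1) 1 / (4 * j%:R ^+ 2).

Lemma lhsS (n : nat) :
  lhs n.+1 - rhs_ratio n%:R * lhs n =
  - ((2 * n%:R + 3) / (n%:R + 1) ^+ 2 * defect n).
Proof.
have parts := @summation_by_parts R (cert n) altH n.+2 erefl.
have extend : lhs n = \sum_(0 <= k < n.+2) term n k * altH k.
  by rewrite [RHS]big_nat_recr //= (@term_vanish n n.+1) // mul0r addr0.
have zsum : \sum_(0 <= k < n.+2) (cert n k.+1 - cert n k) * altH k =
            lhs n.+1 - rhs_ratio n%:R * lhs n.
  rewrite extend mulr_sumr -sumrB; apply: eq_bigr => k _.
  by rewrite -zeilberger; ring.
have dsum : \sum_(0 <= k < n.+2) cert n k.+1 * (altH k.+1 - altH k) =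
            (2 * n%:R + 3) / (n%:R + 1) ^+ 2 * defect n.
  rewrite /defect mulr_sumr; apply: eq_bigr => k _.
  by rewrite altHS /cert /defect_term (addrC (altH k)) addrK; ring.
have cert_end : cert n n.+2 = 0 by rewrite /cert /cert_core term_vanish // !mul0r mulr0.
by rewrite zsum dsum cert_end mul0r sub0r in parts.
Qed.

Lemma lhs_closed (n : nat) : lhs n = rhs_coef n * harm4 n.
Proof.
elim: n => [|n IHn].
  by rewrite /lhs /harm4 big_nat1 altH0 mulr0 big_geq // mulr0.
have harm4S : harm4 n.+1 = harm4 n + 1 / (4 * (n%:R + 1) ^+ 2).
  by rewrite /harm4 big_nat_recr //= -[n.+1%:R]natr1.
move/eqP: (lhsS n); rewrite subr_eq => /eqP ->.
rewrite defect_closed IHn harm4S !rhs_coefS /rhs_ratio.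
move: (rhs_coef n) (harm4 n) => X Y.
field_nat n n.
Qed.

End Identity.

(* The theorem is the case R = rat of [lhs_closed], after dropping the
   vanishing k = 0 summand; the identity holds for n = 0 as well. *)
Theorem mainTheorem7 (n : nat) : (0 < n)%N ->
  \sum_(1 <= k < n.+1)
     ((4 * k + 1)%:R * (poch (1/2 : rat) k) ^+ 3 / (k`!%:R) ^+ 3
        * poch (- n%:R) k / poch (3/2 + n%:R) k
        * \sum_(1 <= i < (2 * k).+1) (-1) ^+ i / (i%:R ^+ 2))
  = poch (1/2 : rat) n * poch (3/2 : rat) n / (n`!%:R) ^+ 2
      * \sum_(1 <= j < n.+1) 1 / (4 * j%:R ^+ 2).
Proof.
move=> _; rewrite -[RHS]/(rhs_coef _ n * harm4 _ n) -lhs_closed.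
rewrite /lhs [RHS]big_ltn // altH0 mulr0 add0r; apply: eq_bigr => k _.
by rewrite /term /hcoef /altH expr_div_n !mulrA.
Qed.
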